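(* Let $m,n$ be natural numbers. If the $n$-th term $G(n,m)$ of the Goodstein sequence $G(m)$ is $0$, then $n=2(2n_2+1)$ for some natural number $n_2$ such that the hereditary representation of $G(n_2-1,m)$ in base $n_2$ is $2\cdot n_2^{1}+0\cdot n_2^{0}$.
   Context: For a natural number base $b>1$, the hereditary representation $m\langle b\rangle$ of $m$ is $\sum_{i=0}^{l} a_i b^{i}$ with $0\le a_i<b$, $a_l\ne0$, each exponent itself written in hereditary representation in base $b$, recursively. $m\langle b\rangle''$ is obtained by syntactically replacing every $b$ by $b+1$ in $m\langle b\rangle$. The Goodstein sequence $G(m)=\{m, m''-1, (m''-1)''-1,\dots\}$ starts from $m$ in base $2$; its $n$-th term is $G(n,m)$, with $G(1,m)=m$ in base $2$, $G(k,m)$ written in base $k+1$, and $G(k+1,m)=G(k,m)\langle k+1\rangle''-1$. *)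

From mathcomp Require Import all_boot.
Set Implicit Arguments. Unset Strict Implicit. Unset Printing Implicit Defensive.

(* Hereditary normal forms: [HN [:: (a_0, e_0); ...; (a_l, e_l)]] denotes
   the formal expression  a_0 * b^(e_0) + ... + a_l * b^(e_l),
   where each exponent e_i is itself such a formal expression. *)
Inductive hnf : Type := HN : seq (nat * hnf) -> hnf.

(* Evaluate a formal expression with base b.  Evaluating the hereditary
   representation in base b+1 is the syntactic replacement b |-> b+1. *)
Fixpoint heval (b : nat) (t : hnf) : nat :=
  let: HN l := t in
  (fix go (l : seq (nat * hnf)) : nat :=
     match l with
     | [::] => 0
     | (a, e) :: l' => a * b ^ (heval b e) + go l'
     end) l.

(* Base-b digits of m, little-endian (a_0, ..., a_l), with a_l <> 0;
   empty for m = 0.  (m steps of fuel suffice for b > 1.) *)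
Fixpoint digits_aux (fuel b m : nat) : seq nat :=
  match fuel with
  | 0 => [::]
  | f.+1 => if m is 0 then [::] else m %% b :: digits_aux f b (m %/ b)
  end.
Definition digits (b m : nat) : seq nat := digits_aux m b m.

(* Hereditary representation m<b> = sum_{i=0}^{l} a_i b^i, every exponent i
   (including those with a_i = 0) written hereditarily in base b. *)
Fixpoint hrep_aux (fuel b m : nat) : hnf :=
  match fuel with
  | 0 => HN [::]
  | f.+1 => HN [seq (nth 0 (digits b m) i, hrep_aux f b i)
                 | i <- iota 0 (size (digits b m))]
  end.
Definition hrep (b m : nat) : hnf := hrep_aux m.+1 b m.

Definition bump (b m : nat) : nat := heval b.+1 (hrep b m).

(* Goodstein sequence, indexed from 1: goodstein 1 m = Some m (base 2),
   goodstein k m is written in base k+1, and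
   goodstein (k+1) m = (goodstein k m)<k+1>'' - 1.
   The sequence terminates once it reaches 0: terms after a 0 term (and
   the non-existent term of index 0) are None. *)
Fixpoint goodstein (n m : nat) : option nat :=
  match n with
  | 0 => None
  | k.+1 =>
      if k is 0 then Some m
      else match goodstein k m with
           | Some x => if x == 0 then None else Some (bump k.+1 x - 1)
           | None => None
           end
  end.

(* The formal expression 2 * b^1 + 0 * b^0 (exponents in hereditary form:
   0 is the empty sum, 1 = 1 * b^0). *)
Definition two_b_plus_zero : hnf :=
  HN [:: (0, HN [::]); (2, HN [:: (1, HN [::])])].

From mathcomp Require Import all_boot zify.
Set Implicit Arguments. Unset Strict Implicit. Unset Printing Implicit Defensive.

(* Evaluating a number's base-b digits in base b+1 gains at least the number
   formed by its higher digits, so [bump b x >= x + x %/ b].  Hence, as long as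
   a Goodstein term at base b is at least 2b and is not exactly 2b (with b > 2),
   the next term is at least 2(b+1): by induction this persists until the term
   equals 2b for some base b = n2 > 2.  From there the sequence is explicit:
   2b becomes (b+1) + b, the units digit then decreases by one per step
   until the term is 2b+1 at base 2b+2, where it is a single digit and
   counts down to 0, reached at index 2(2b+1).  Termination is unique, since a
   Goodstein sequence stops after its first zero. *)

Definition eval_digits (c : nat) (s : seq nat) : nat :=
  \sum_(i < size s) nth 0 s i * c ^ i.

Lemma eval_digits_cons c d s : eval_digits c (d :: s) = d + c * eval_digits c s.
Proof.
rewrite /eval_digits big_ord_recl /= expn0 muln1 big_distrr; congr addn.
by apply: eq_bigr => i _; rewrite expnS mulnCA.
Qed.

Lemma leq_eval_digits s c c' : c <= c' -> eval_digits c s <= eval_digits c' s.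
Proof.
move=> le_cc'; elim: s => [|d s IHs]; first by rewrite /eval_digits !big_ord0.
by rewrite !eval_digits_cons leq_add2l leq_mul.
Qed.

Lemma heval_HN c l : heval c (HN l) = \sum_(p <- l) p.1 * c ^ heval c p.2.
Proof.
elim: l => [|[a e] l IHl]; first by rewrite big_nil.
by rewrite big_cons -IHl.
Qed.

Lemma bump0 b : bump b 0 = 0.
Proof. by []. Qed.

Section Digits.

Variable b : nat.
Hypothesis b_gt1 : 1 < b.

Lemma digits_aux_fuel f1 f2 x :
  x <= f1 -> x <= f2 -> digits_aux f1 b x = digits_aux f2 b x.
Proof.
elim: f1 f2 x => [|f1 IHf] [|f2] [|x] //= le_x1 le_x2.
have lt_div := ltn_Pdiv b_gt1 (ltn0Sn x).
by congr cons; apply: IHf; lia.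
Qed.

Lemma digits_pos x : 0 < x -> digits b x = x %% b :: digits b (x %/ b).
Proof.
case: x => [//|x] _; rewrite /digits /=; congr cons.
by apply: digits_aux_fuel => //; have := ltn_Pdiv b_gt1 (ltn0Sn x); lia.
Qed.

Lemma digits_add_mul c y :
  c < b -> 0 < c + b * y -> digits b (c + b * y) = c :: digits b y.
Proof.
move=> lt_cb pos; rewrite digits_pos // addnC mulnC modnMDl modn_small //.
by rewrite divnMDl ?divn_small ?addn0 //; lia.
Qed.

Lemma digits_digit c : 0 < c < b -> digits b c = [:: c].
Proof.
case/andP=> c_gt0 lt_cb.
by have := @digits_add_mul c 0 lt_cb; rewrite muln0 addn0 => ->.
Qed.

Lemma size_digits x : size (digits b x) <= x.
Proof.
elim/ltn_ind: x => [[//|x] IHx]; rewrite digits_pos //=.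
by have lt_div := ltn_Pdiv b_gt1 (ltn0Sn x); have := IHx _ lt_div; lia.
Qed.

Lemma digitsK x : eval_digits b (digits b x) = x.
Proof.
elim/ltn_ind: x => [[|x] IHx]; first by rewrite /eval_digits big_ord0.
rewrite digits_pos // eval_digits_cons IHx; last exact: ltn_Pdiv.
by rewrite mulnC addnC -divn_eq.
Qed.

Lemma hrep_aux_fuel f1 f2 x :
  x < f1 -> x < f2 -> hrep_aux f1 b x = hrep_aux f2 b x.
Proof.
elim: f1 f2 x => [|f1 IHf] [|f2] x //= lt_x1 lt_x2; congr HN.
apply/eq_in_map => i; rewrite mem_iota => /andP[_ lt_i].
by congr (_, _); apply: IHf; have := size_digits x; lia.
Qed.

Lemma hrepE x :
  hrep b x = HN [seq (nth 0 (digits b x) i, hrep b i) | i <- iota 0 (size (digits b x))].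
Proof.
rewrite /hrep [hrep_aux x.+1 b x]/=; congr HN.
apply/eq_in_map => i; rewrite mem_iota => /andP[_ lt_i].
by congr (_, _); apply: hrep_aux_fuel; have := size_digits x; lia.
Qed.

Lemma bumpE x :
  bump b x = \sum_(i < size (digits b x)) nth 0 (digits b x) i * b.+1 ^ bump b i.
Proof.
rewrite {1}/bump hrepE heval_HN big_map -{1}[size _]subn0 -/(index_iota 0 _).
by rewrite big_mkord.
Qed.

Lemma eval_digits_le_bump x :
  (forall i, i < size (digits b x) -> i <= bump b i) ->
  eval_digits b.+1 (digits b x) <= bump b x.
Proof.
move=> le_bump; rewrite bumpE; apply: leq_sum => i _.
by rewrite leq_mul2l leq_pexp2l ?le_bump ?orbT.
Qed.

Lemma leq_bump x : x <= bump b x.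
Proof.
elim/ltn_ind: x => x IHx; rewrite -{1}(digitsK x).
apply: leq_trans (leq_eval_digits _ (leqnSn b)) _.
apply: eval_digits_le_bump => i lt_i; apply: IHx; have := size_digits x; lia.
Qed.

Lemma bump_ge_add_div x : x + x %/ b <= bump b x.
Proof.
case: (posnP x) => [-> |x_gt0]; first by rewrite div0n.
apply: leq_trans _ (eval_digits_le_bump (fun i _ => leq_bump i)).
rewrite digits_pos // eval_digits_cons.
have := leq_eval_digits (digits b (x %/ b)) (leqnSn b); rewrite digitsK.
by have := divn_eq x b; nia.
Qed.

Lemma bump_digit c : c < b -> bump b c = c.
Proof.
case: (posnP c) => [-> //|c_gt0 lt_cb].
by rewrite bumpE digits_digit ?c_gt0 // big_ord1 /= muln1.
Qed.

Lemma bump_two_digits c d : c < b -> d < b -> bump b (c + b * d) = c + b.+1 * d.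
Proof.
move=> lt_cb lt_db; case: (posnP d) => [->|d_gt0].
  by rewrite !muln0 !addn0 bump_digit.
rewrite bumpE digits_add_mul ?digits_digit ?d_gt0 //; last by lia.
by rewrite big_ord_recl big_ord1 /= bump0 (@bump_digit 1) // expn0 expn1 muln1 mulnC.
Qed.

End Digits.

Lemma hrep_double b : 2 < b -> hrep b (2 * b) = two_b_plus_zero.
Proof.
move=> b_gt2; have b_gt1 : 1 < b := ltnW b_gt2.
have digits_2b : digits b (2 * b) = [:: 0; 2].
  by rewrite mulnC -[b * 2]add0n digits_add_mul ?digits_digit //; lia.
by rewrite hrepE // digits_2b /= [hrep b 1]hrepE // digits_digit.
Qed.

Lemma bump_ge_double b x :
  1 < b -> 2 * b <= x -> (x != 2 * b) || (b == 2) -> 2 * b + 3 <= bump b x.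
Proof.
(* For [x = 2 * 2 = 2^2] the bound below is too weak, but [x] bumps to [3^3]. *)
move=> b_gt1 le_2b_x; case: eqP => [-> /= /eqP -> //|/eqP ne_x _].
have le2_div : 2 <= x %/ b by rewrite leq_divRL 1?mulnC //; lia.
by have := bump_ge_add_div b_gt1 x; lia.
Qed.

Section Goodstein.

Variable m : nat.

Lemma goodsteinS k : 0 < k ->
  goodstein k.+1 m =
    if goodstein k m is Some x then
      if x == 0 then None else Some (bump k.+1 x - 1)
    else None.
Proof. by case: k. Qed.

Lemma goodstein_step k x : 0 < k -> goodstein k m = Some x -> 0 < x ->
  goodstein k.+1 m = Some (bump k.+1 x - 1).
Proof. by move=> k_gt0 gk x_gt0; rewrite goodsteinS // gk eqn0Ngt x_gt0. Qed.

Lemma goodstein_after_zero i j :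
  goodstein i m = Some 0 -> i < j -> goodstein j m = None.
Proof.
move=> gi; have i_gt0 : 0 < i by case: i gi.
elim: j => [//|j IHj]; rewrite ltnS leq_eqVlt => /orP[/eqP eq_ij|lt_ij].
  by rewrite -eq_ij goodsteinS // gi.
by rewrite goodsteinS ?IHj //; lia.
Qed.

Lemma goodstein_zero_uniq i j :
  goodstein i m = Some 0 -> goodstein j m = Some 0 -> i = j.
Proof.
move=> gi gj; case: (ltngtP i j) => [lt_ij|lt_ji|//].
  by rewrite (goodstein_after_zero gi lt_ij) in gj.
by rewrite (goodstein_after_zero gj lt_ji) in gi.
Qed.

Lemma goodstein_countdown j x : 0 < j -> goodstein j m = Some x -> x <= j ->
  goodstein (j + x) m = Some 0.
Proof.
elim: x j => [|x IHx] j j_gt0 gj le_xj; first by rewrite addn0.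
rewrite -addSnnS; apply: IHx => //; last by lia.
by rewrite (goodstein_step j_gt0 gj) // bump_digit ?subn1.
Qed.

Lemma goodstein_step_base_add j c : 0 < j -> c <= j ->
  goodstein j m = Some (j.+1 + c) -> goodstein j.+1 m = Some (j.+1 + c).
Proof.
move=> j_gt0 le_cj gj; rewrite (goodstein_step j_gt0 gj) ?addn_gt0 //.
have -> : j.+1 + c = c + j.+1 * 1 by lia.
by rewrite bump_two_digits //; congr Some; lia.
Qed.

Lemma goodstein_base_add j c : 0 < j -> c <= j ->
  goodstein j m = Some (j.+1 + c) -> goodstein (j + c).+1 m = Some (j + c).+1.
Proof.
elim: c j => [|c IHc] j j_gt0 le_cj gj.
  by have := goodstein_step_base_add j_gt0 le_cj gj; rewrite !addn0.
rewrite -addSnnS; apply: IHc => //; first by lia.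
by rewrite (goodstein_step_base_add j_gt0 le_cj gj) addnS.
Qed.

Lemma goodstein_from_double k : 1 < k -> goodstein k m = Some (2 * k.+1) ->
  goodstein (2 * (2 * k.+1 + 1)) m = Some 0.
Proof.
move=> k_gt1 gk.
have gk1 : goodstein k.+1 m = Some (k.+2 + k.+1).
  rewrite (goodstein_step (ltnW k_gt1) gk) ?muln_gt0 //.
  by rewrite -[2 * k.+1]add0n mulnC bump_two_digits //; [congr (Some _)|]; lia.
have -> : 2 * (2 * k.+1 + 1) = (k.+1 + k.+1).+1 + (k.+1 + k.+1).+1 by lia.
exact: goodstein_countdown _ (goodstein_base_add _ _ gk1) (leqnn _).
Qed.

Lemma goodstein_large_step k x : 0 < k -> goodstein k m = Some x ->
  2 * k.+1 <= x -> (x != 2 * k.+1) || (k == 1) ->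
  exists2 y, goodstein k.+1 m = Some y & 2 * k.+2 <= y.
Proof.
move=> k_gt0 gk le_x not_double; rewrite (goodstein_step k_gt0 gk); last by lia.
exists (bump k.+1 x - 1) => //.
by have := @bump_ge_double k.+1 x k_gt0 le_x not_double; lia.
Qed.

Lemma goodstein_reaches_double n : 4 <= m -> goodstein n m = Some 0 ->
  exists2 k, 1 < k & goodstein k m = Some (2 * k.+1).
Proof.
move=> m_ge4 gn.
suff: forall j, (exists2 x, goodstein j.+1 m = Some x & 2 * j.+2 <= x) \/
                exists2 k, 1 < k & goodstein k m = Some (2 * k.+1).
  case: n gn => [//|j] gn /(_ j) [[x]|//]; rewrite gn => -[<-]; lia.
elim=> [|j [[x gj le_x]|]]; [by left; exists m| |by right].
case: (boolP ((x != 2 * j.+2) || (j.+1 == 1))) => [not_double|].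
  by left; apply: goodstein_large_step not_double.
rewrite negb_or negbK => /andP[/eqP x_eq j_ne0].
by right; exists j.+1; [lia | rewrite gj x_eq].
Qed.

End Goodstein.

Theorem lemma7 (m n : nat) :
  4 <= m ->
  goodstein n m = Some 0 ->
  exists n2 : nat,
    n = 2 * (2 * n2 + 1) /\ 1 < n2 /\
    exists v : nat, goodstein (n2 - 1) m = Some v /\ hrep n2 v = two_b_plus_zero.
Proof.
move=> m_ge4 gn.
have [k k_gt1 gk] := goodstein_reaches_double m_ge4 gn.
exists k.+1; split; first exact: goodstein_zero_uniq gn (goodstein_from_double k_gt1 gk).
split; first exact: ltnW.
by exists (2 * k.+1); rewrite subn1 hrep_double.
Qed.
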